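(* Let $\psi\in\mathbf{\Psi}_n$. Then the dual norm of $|\!|\!|\cdot|\!|\!|_\psi$ satisfies, for all $(x^*_1,\ldots,x^*_n)\in(X^n)^*\cong(X^* )^n$, $$|\!|\!|(x^*_1,\ldots,x^*_n)|\!|\!|_{\psi} =\max_{(t_1,\ldots,t_n)\in\Omega_n}\frac{\sum_{i=1}^nt_i\|x^*_i\|}{\psi (t_1,\ldots,t_{n})}.$$
   Context: Let $(X,\|\cdot\|)$ be a normed vector space, $n\ge2$; the dual norm on $X^*$ is also denoted $\|\cdot\|$, and the dual norm of a norm on $X^n$ is denoted by the same symbol. $\Omega_n:=\{t\in\mathbb{R}^n\mid t_i\ge0,\ \sum_i t_i=1\}$, $\Omega_n^\circ:=\{t\in\Omega_n\mid t_i<1\ \forall i\}$. $\mathbf{\Psi}_n$ is the class of convex continuous $\psi:\Omega_n\to\mathbb{R}$ with (B1) $\psi(\mathbf{e}_i)=1$ for all standard unit vectors $\mathbf{e}_i$ and (B2) $\psi(t)\ge(1-t_i)\psi\big(\frac{t_1}{1-t_i},\ldots,\frac{t_{i-1}}{1-t_i},0,\frac{t_{i+1}}{1-t_i},\ldots,\frac{t_n}{1-t_i}\big)$ for all $t\in\Omega_n^\circ$, $i=1,\ldots,n$. For $\psi\in\mathbf{\Psi}_n$, $|\!|\!|x|\!|\!|_\psi:=\big(\sum_{i=1}^n\|x_i\|\big)\,\psi\big(\frac{\|x_1\|}{\sum_{i}\|x_i\|},\ldots,\frac{\|x_n\|}{\sum_{i}\|x_i\|}\big)$ for $x=(x_1,\ldots,x_n)\in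 X^n\setminus\{0\}$ and $|\!|\!|0|\!|\!|_\psi:=0$; this is a norm on $X^n$. *)

From HB Require Import structures.
From mathcomp Require Import all_boot all_order all_algebra.
From mathcomp Require Import all_classical all_reals all_analysis.
Set Implicit Arguments. Unset Strict Implicit. Unset Printing Implicit Defensive.
Import Order.TTheory GRing.Theory Num.Theory.
Import numFieldNormedType.Exports.
Local Open Scope classical_set_scope.
Local Open Scope ring_scope.

Definition Omega (R : realType) (n : nat) : set ('I_n -> R) :=
  [set t | (forall i, 0 <= t i) /\ \sum_(i < n) t i = 1].

Definition Omega_int (R : realType) (n : nat) : set ('I_n -> R) :=
  [set t | Omega t /\ (forall i, t i < 1)].

Definition drop_coord (R : realType) (n : nat) (t : 'I_n -> R) (i : 'I_n)
  : 'I_n -> R := fun j => if j == i then 0 else t j / (1 - t i).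

Definition PsiClass (R : realType) (n : nat) (psi : ('I_n -> R) -> R) : Prop :=
  (forall s t (l : R), Omega s -> Omega t -> 0 <= l <= 1 ->
     psi (fun j => l * s j + (1 - l) * t j) <= l * psi s + (1 - l) * psi t) /\
  (forall t, Omega t -> forall e : R, 0 < e -> exists2 d : R, 0 < d &
     forall s, Omega s -> (forall j, `|s j - t j| < d) -> `|psi s - psi t| < e) /\
  (* (B1) *)
  (forall i : 'I_n, psi (fun j => (j == i)%:R) = 1) /\
  (* (B2) *)
  (forall t, Omega_int t -> forall i : 'I_n,
     (1 - t i) * psi (drop_coord t i) <= psi t).

Definition psinorm (R : realType) (X : normedModType R) (n : nat)
  (psi : ('I_n -> R) -> R) (x : 'I_n -> X) : R :=
  let S := \sum_(i < n) `|x i| in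
  if S == 0 then 0 else S * psi (fun i => `|x i| / S).

Definition dualnorm (R : realType) (X : normedModType R) (f : X -> R) : R :=
  sup [set `|f x| | x in [set x : X | `|x| <= 1]].

(* dual norm of |||.|||_psi, evaluated at the functional
   x |-> sum_i xs_i(x_i) on X^n *)
Definition psi_dualnorm (R : realType) (X : normedModType R) (n : nat)
  (psi : ('I_n -> R) -> R) (xs : 'I_n -> X -> R) : R :=
  sup [set `|\sum_(i < n) xs i (x i)| | x in [set x : 'I_n -> X | psinorm psi x <= 1]].

Definition is_dual_elt (R : realType) (X : normedModType R) (f : X -> R) : Prop :=
  (forall (a : R) (u v : X), f (a *: u + v) = a * f u + f v) /\ continuous f.

From HB Require Import structures.
From mathcomp Require Import all_boot all_order all_algebra.
From mathcomp Require Import all_classical all_reals all_analysis.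
From mathcomp Require Import ring lra.
Set Implicit Arguments. Unset Strict Implicit. Unset Printing Implicit Defensive.
Import Order.TTheory GRing.Theory Num.Theory.
Import numFieldNormedType.Exports.
Local Open Scope classical_set_scope.
Local Open Scope ring_scope.

(* For x in X^n with S = sum_i |x_i| and t_i = |x_i| / S, the bound
   |x_i*(x_i)| <= |x_i*| |x_i| gives |sum_i x_i*(x_i)| <= |||x|||_psi * F(t), so
   the dual norm is at most the maximum of F over the simplex; that maximum
   exists because psi is continuous and, by (B1), (B2) and induction on the
   support, positive on the compact set Omega_n.  Conversely, for t in Omega_n
   pick unit vectors u_i almost norming x_i*: the point x_i = (t_i / psi t) u_i
   has |||x|||_psi = 1 and sum_i x_i*(x_i) is almost F(t). *)

Section Simplex.
Variables (R : realType) (n : nat).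
Implicit Types (t : 'I_n -> R) (i : 'I_n).

Lemma Omega_le1 t i : Omega t -> t i <= 1.
Proof. by move=> [t_ge0 <-]; rewrite (bigD1 i) //= lerDl sumr_ge0. Qed.

Lemma Omega_delta i : Omega (fun j => (j == i)%:R : R).
Proof.
split=> [j|]; first exact: ler0n.
by rewrite (bigD1 i) //= eqxx big1 ?addr0 // => j /negPf ->.
Qed.

Lemma Omega_normalize (a : 'I_n -> R) : (forall i, 0 <= a i) ->
  \sum_i a i != 0 -> Omega (fun i => a i / \sum_j a j).
Proof.
move=> a_ge0 sa_neq0; split=> [i|]; last by rewrite -mulr_suml divff.
by rewrite divr_ge0 ?sumr_ge0.
Qed.

Lemma Omega_vertex t i : Omega t -> t i = 1 -> t = (fun j => (j == i)%:R).
Proof.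
move=> [t_ge0 t_sum] ti1; apply/funext => j; case: eqVneq => [-> //|ji].
have /eqP : \sum_(k | k != i) t k = 0.
  by move: t_sum; rewrite [in LHS](bigD1 i) //= ti1; lra.
by rewrite psumr_eq0 // => /allP/(_ j (mem_index_enum _)); rewrite ji => /eqP.
Qed.

Lemma Omega_support_neq0 t : Omega t -> exists i, t i != 0.
Proof.
move=> [_ t_sum]; apply/existsP; apply: contraT; rewrite negb_exists => /forallP t0.
by move: t_sum; rewrite big1 => [/esym/eqP|j _]; [rewrite oner_eq0 | exact/eqP/negPn].
Qed.

Lemma Omega_drop_coord t i : Omega t -> t i < 1 -> Omega (drop_coord t i).
Proof.
move=> [t_ge0 t_sum] ti_lt1; have ti_gt0 : 0 < 1 - t i by rewrite subr_gt0.
split=> [j|].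
  by rewrite /drop_coord; case: eqP => // _; exact: divr_ge0 (t_ge0 j) (ltW ti_gt0).
rewrite (bigD1 i) //= /drop_coord eqxx add0r.
rewrite (eq_bigr (fun j => t j / (1 - t i))) => [|j /negPf -> //].
have rest : \sum_(j | j != i) t j = 1 - t i.
  by rewrite -t_sum [in RHS](bigD1 i) //= addrAC subrr add0r.
by rewrite -mulr_suml rest divff // gt_eqF.
Qed.

Lemma support_drop_coord t i :
  ([set j | drop_coord t i j != 0] \subset [set j | t j != 0] :\ i)%SET.
Proof.
apply/fintype.subsetP => j; rewrite !inE /drop_coord.
case: (eqVneq j i) => _ /=; first by rewrite eqxx.
by rewrite mulf_eq0 negb_or => /andP[].
Qed.

End Simplex.

Section PsiClass.
Variables (R : realType) (n : nat) (psi : ('I_n -> R) -> R).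
Hypothesis hpsi : PsiClass psi.

Lemma PsiClass_gt0 t : Omega t -> 0 < psi t.
Proof.
(* (B2) bounds psi t below by a positive multiple of psi at a point of smaller
   support, and psi is 1 at the vertices by (B1). *)
have [_ [_ [psi_vertex psi_drop]]] := hpsi.
move: {2}#|_| (leqnn #|[set j | t j != 0]%SET|) => k.
elim: k t => [|k IHk] t supp_k Ot.
  have [i ti_neq0] := Omega_support_neq0 Ot.
  by move: supp_k; rewrite leqn0 cards_eq0 => /eqP/setP/(_ i); rewrite !inE ti_neq0.
have [i /eqP ti1 | t_neq1] := pickP (fun i => t i == 1).
  by rewrite (Omega_vertex Ot ti1) psi_vertex ltr01.
have t_lt1 j : t j < 1 by rewrite lt_neqAle Omega_le1 // t_neq1.
have [i ti_neq0] := Omega_support_neq0 Ot.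
apply: lt_le_trans (psi_drop t (conj Ot t_lt1) i).
apply: mulr_gt0; first by rewrite subr_gt0.
apply: IHk; last exact: Omega_drop_coord.
rewrite -ltnS (leq_ltn_trans (subset_leq_card (support_drop_coord t i))) //.
by move: supp_k; rewrite (cardsD1 i) inE ti_neq0 add1n.
Qed.

Lemma psinorm_ge0 (X : normedModType R) (x : 'I_n -> X) : 0 <= psinorm psi x.
Proof.
rewrite /psinorm; case: ifPn => // S_neq0.
by rewrite mulr_ge0 ?sumr_ge0 // ltW // PsiClass_gt0 //; exact: Omega_normalize.
Qed.

Lemma psinorm_scaled_units (X : normedModType R) t (u : 'I_n -> X) :
  Omega t -> (forall i, `|u i| = 1) ->
  psinorm psi (fun i => (t i / psi t) *: u i) = 1.
Proof.
move=> Ot u1; have psi_gt0 := PsiClass_gt0 Ot.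
have norm_x i : `|(t i / psi t) *: u i| = t i / psi t.
  by rewrite normrZ u1 mulr1 ger0_norm // divr_ge0 ?Ot.1 ?ltW.
rewrite /psinorm (eq_bigr _ (fun i _ => norm_x i)) -mulr_suml Ot.2 mul1r.
rewrite invr_eq0 (gt_eqF psi_gt0).
have -> : (fun i => `|(t i / psi t) *: u i| / (psi t)^-1) = t.
  by apply/funext => i; rewrite norm_x invrK mulfVK ?gt_eqF.
by rewrite mulVf ?gt_eqF.
Qed.

End PsiClass.

Section DualElement.
Variables (R : realType) (X : normedModType R) (f : X -> R).
Hypothesis hf : is_dual_elt f.

Lemma dual_elt0 : f 0 = 0.
Proof. by have := hf.1 1 0 0; rewrite scaler0 addr0 mul1r; lra. Qed.

Lemma dual_eltZ a u : f (a *: u) = a * f u.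
Proof. by rewrite -[a *: u]addr0 hf.1 dual_elt0 addr0. Qed.

Lemma dual_eltN u : f (- u) = - f u.
Proof. by rewrite -scaleN1r dual_eltZ mulN1r. Qed.

Lemma dual_elt_bounded : exists C, forall x : X, `|x| <= 1 -> `|f x| <= C.
Proof.
have /cvgrPdist_lt/(_ 1 ltr01)/nbhs_ballP[d d_gt0 fd] := hf.2 0.
exists (2 / d) => x x_le1.
have d2_gt0 : 0 < d / 2 by rewrite divr_gt0.
have : ball (0 : X) d ((d / 2) *: x).
  rewrite -ball_normE /ball_ /= sub0r normrN normrZ gtr0_norm //.
  rewrite (le_lt_trans (ler_wpM2l (ltW d2_gt0) x_le1)) // mulr1.
  by rewrite ltr_pdivrMr // ltr_pMr // ltr1n.
move=> /fd; rewrite /= dual_elt0 sub0r normrN dual_eltZ normrM gtr0_norm // => fx.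
rewrite -(ler_pM2l d2_gt0) (le_trans (ltW fx)) //.
suff -> : d / 2 * (2 / d) = 1 by [].
by field; rewrite gt_eqF.
Qed.

Lemma has_sup_dualnorm : has_sup [set `|f x| | x in [set x : X | `|x| <= 1]].
Proof.
have [C fC] := dual_elt_bounded.
split; first by exists 0, 0; rewrite /= ?normr0 ?dual_elt0 ?normr0.
by exists C => _ [x /= x_le1 <-]; exact: fC.
Qed.

Lemma dualnorm_ub x : `|x| <= 1 -> `|f x| <= dualnorm f.
Proof. by move=> x_le1; apply: (sup_upper_bound has_sup_dualnorm); exists x. Qed.

Lemma dualnorm_ge0 : 0 <= dualnorm f.
Proof. by apply: le_trans (normr_ge0 (f 0)) (dualnorm_ub _); rewrite normr0.
Qed.

Lemma dual_elt_le u : `|f u| <= dualnorm f * `|u|.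
Proof.
have [-> | u_neq0] := eqVneq u 0; first by rewrite dual_elt0 !normr0 mulr0.
have u_gt0 : 0 < `|u| by rewrite normr_gt0.
have : `|f (`|u|^-1 *: u)| <= dualnorm f.
  by rewrite dualnorm_ub ?normfZV.
by rewrite dual_eltZ normrM normfV normr_id mulrC ler_pdivrMr.
Qed.

Lemma dual_elt_unit_ge z : (exists e : X, e != 0) -> `|z| <= 1 ->
  exists2 u, `|u| = 1 & `|f z| <= f u.
Proof.
move=> [e e_neq0] z_le1.
have [w w1 fzw] : exists2 w : X, `|w| = 1 & `|f z| <= `|f w|.
  have [-> | z_neq0] := eqVneq z 0.
    by exists (`|e|^-1 *: e); rewrite ?normfZV // dual_elt0 normr0.
  exists (`|z|^-1 *: z); rewrite ?normfZV // dual_eltZ normrM normfV normr_id.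
  by rewrite ler_peMl // invf_ge1 // normr_gt0.
have [fw_ge0 | fw_lt0] := leP 0 (f w).
  by exists w; rewrite // -(ger0_norm fw_ge0).
by exists (- w); rewrite ?normrN // dual_eltN -(ltr0_norm fw_lt0).
Qed.

Lemma dualnorm_approx eps : (exists e : X, e != 0) -> 0 < eps ->
  exists2 u, `|u| = 1 & dualnorm f - eps < f u.
Proof.
move=> X_nontriv eps_gt0.
have [_ [z /= z_le1 <-] fz] := sup_adherent eps_gt0 has_sup_dualnorm.
have [u u1 fzu] := dual_elt_unit_ge X_nontriv z_le1.
by exists u => //; apply: lt_le_trans fzu.
Qed.

Lemma dualnorm_trivial : (forall x : X, x = 0) -> dualnorm f = 0.
Proof.
move=> X0; apply/eqP; rewrite eq_le dualnorm_ge0 andbT.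
apply: ge_sup; first by exists 0, 0; rewrite /= ?normr0 ?dual_elt0 ?normr0.
by move=> _ [x _ <-]; rewrite (X0 x) dual_elt0 normr0.
Qed.

End DualElement.

Definition simplex_ratio (R : realType) (n : nat) (psi : ('I_n -> R) -> R)
  (c : 'I_n -> R) (t : 'I_n -> R) : R := (\sum_i t i * c i) / psi t.

Section SimplexCompact.
Variables (R : realType) (n : nat).

(* The simplex as a set of row vectors, where Heine-Borel and the extreme value
   theorem are available. *)
Definition Omega_row : set 'rV[R]_n := [set v | Omega (fun i => v ord0 i)].

Lemma row_coordK (t : 'I_n -> R) : (fun i => (\row_j t j) ord0 i) = t.
Proof. by apply/funext => i; rewrite mxE. Qed.

Lemma ball_row_coord (p v : 'rV[R]_n) d :
  ball p d v -> forall i, `|p ord0 i - v ord0 i| < d.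
Proof. by move=> [_ pv] i; exact: pv. Qed.

Lemma continuous_row_wsum (c : 'I_n -> R) :
  continuous (fun v : 'rV[R]_n => \sum_i v ord0 i * c i).
Proof.
have -> : (fun v : 'rV[R]_n => \sum_i v ord0 i * c i) =
    \sum_i (fun v : 'rV[R]_n => v ord0 i * c i) by rewrite fct_sumE.
elim/big_ind: _ => [|f g fc gc v|i _ v]; first exact: cst_continuous.
  by apply: continuousD; [exact: fc | exact: gc].
by apply: continuousM; [exact: coord_continuous | exact: cst_continuous].
Qed.

Lemma closed_Omega_row : closed Omega_row.
Proof.
have -> : Omega_row =
    \bigcap_(i in [set: 'I_n]) [set v : 'rV[R]_n | 0 <= v ord0 i] `&`
    (fun v : 'rV[R]_n => \sum_i v ord0 i * 1) @^-1` [set 1].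
  apply/seteqP; split=> v; rewrite /Omega_row /= (eq_bigr _ (fun i _ => mulr1 _)).
    by case=> v_ge0 v_sum; split=> // i _; exact: v_ge0.
  by case=> v_ge0 v_sum; split=> // i; exact: v_ge0.
apply: closedI.
  apply: closed_bigI => i _.
  exact: (continuous_closedP _).1 (@coord_continuous R _ _ ord0 i) _ (@closed_ge R 0).
exact: (continuous_closedP _).1 (@continuous_row_wsum (fun=> 1)) _ (@closed_eq R 1).
Qed.

Lemma compact_Omega_row : compact Omega_row.
Proof.
apply: (subclosed_compact closed_Omega_row
  (@rV_compact R n (fun=> `[0, 1]%classic) (fun=> @segment_compact R 0 1))) => v Ov i.
by rewrite /= in_itv /= Ov.1 Omega_le1.
Qed.

Lemma continuous_within_Omega_row_psi (psi : ('I_n -> R) -> R) : PsiClass psi ->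
  {within Omega_row, continuous (fun v => psi (fun i => v ord0 i))}.
Proof.
move=> [_ [psi_cont _]]; apply/subspace_continuousP => p Op.
apply/cvgrPdist_lt => e e_gt0; rewrite near_withinE.
have [d d_gt0 psi_d] := psi_cont _ Op e e_gt0.
apply/nbhs_ballP; exists d => // v pv Ov.
by rewrite distrC psi_d // => j; rewrite distrC; exact: ball_row_coord pv j.
Qed.

Lemma simplex_ratio_max (psi : ('I_n -> R) -> R) (c : 'I_n -> R) :
  (0 < n)%N -> PsiClass psi -> exists2 t0, Omega t0 &
  forall t, Omega t -> simplex_ratio psi c t <= simplex_ratio psi c t0.
Proof.
move=> n_gt0 hpsi.
have Orow_neq0 : Omega_row !=set0.
  exists (\row_j ((j == Ordinal n_gt0)%:R)).
  by rewrite /Omega_row /= row_coordK; exact: Omega_delta.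
have ratio_cont : {within Omega_row,
    continuous (fun v => simplex_ratio psi c (fun i => v ord0 i))}.
  apply/subspace_continuousP => p Op.
  have psi_p := (subspace_continuousP _ _).1
    (continuous_within_Omega_row_psi hpsi) p Op.
  have sum_p := (subspace_continuousP _ _).1
    (continuous_subspaceT (@continuous_row_wsum c)) p Op.
  exact: cvgM sum_p (cvgV (lt0r_neq0 (PsiClass_gt0 hpsi Op)) psi_p).
have [v0 Ov0 v0_max] := EVT_max_rV Orow_neq0 compact_Omega_row ratio_cont.
exists (fun i => v0 ord0 i); first by rewrite inE in Ov0.
move=> t Ot; rewrite -[t in X in X <= _]row_coordK; apply: v0_max.
by rewrite inE /Omega_row /= row_coordK.
Qed.

End SimplexCompact.

Section PsiDuality.
Variables (R : realType) (X : normedModType R) (n : nat).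
Variables (psi : ('I_n -> R) -> R) (xs : 'I_n -> X -> R).
Hypotheses (n_gt0 : (0 < n)%N) (hpsi : PsiClass psi).
Hypothesis hxs : forall i, is_dual_elt (xs i).

Let dual_ratio := simplex_ratio psi (fun i => dualnorm (xs i)).
Let psi_dual_set :=
  [set `|\sum_i xs i (x i)| | x in [set x | psinorm psi x <= 1]].

Lemma dual_ratio_ge0 t : Omega t -> 0 <= dual_ratio t.
Proof.
move=> Ot; apply: divr_ge0; last exact/ltW/(PsiClass_gt0 hpsi).
by apply: sumr_ge0 => i _; rewrite mulr_ge0 ?Ot.1 ?dualnorm_ge0.
Qed.

Lemma dual_sum_le_psinorm M (x : 'I_n -> X) :
  (forall t, Omega t -> dual_ratio t <= M) ->
  `|\sum_i xs i (x i)| <= psinorm psi x * M.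
Proof.
move=> ratio_le; apply: le_trans (ler_norm_sum _ _ _) _.
apply: le_trans (ler_sum _ (fun i _ => dual_elt_le (hxs i) (x i))) _.
set S := \sum_i `|x i|.
have [S0 | S_neq0] := eqVneq S 0.
  have x0 i : `|x i| = 0.
    apply/eqP; move: S0 => /eqP.
    by rewrite psumr_eq0 // => /allP/(_ i (mem_index_enum _)).
  by rewrite /psinorm -/S S0 eqxx mul0r big1 // => i _; rewrite x0 mulr0.
pose t i := `|x i| / S.
have Ot : Omega t by apply: Omega_normalize.
have -> : \sum_i dualnorm (xs i) * `|x i| = psinorm psi x * dual_ratio t.
  rewrite /psinorm -/S (negPf S_neq0) /dual_ratio /simplex_ratio -mulrA.
  rewrite [psi t * _]mulrC mulfVK ?lt0r_neq0 ?(PsiClass_gt0 hpsi) // mulr_sumr.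
  by apply: eq_bigr => i _; rewrite /t; field.
by rewrite ler_wpM2l ?psinorm_ge0 ?ratio_le.
Qed.

Lemma psi_dual_set0 : psi_dual_set 0.
Proof.
exists (fun=> 0); last by rewrite big1 ?normr0 // => i _; rewrite dual_elt0.
by rewrite /= /psinorm big1 ?eqxx // => i _; rewrite normr0.
Qed.

Lemma psi_dual_set_ubound M : 0 <= M ->
  (forall t, Omega t -> dual_ratio t <= M) -> ubound psi_dual_set M.
Proof.
move=> M_ge0 ratio_le _ [x x_le1 <-].
by apply: le_trans (dual_sum_le_psinorm x ratio_le) _; rewrite ler_piMl.
Qed.

Lemma psi_dualnorm_le M : 0 <= M -> (forall t, Omega t -> dual_ratio t <= M) ->
  psi_dualnorm psi xs <= M.
Proof.
move=> M_ge0 ratio_le; apply: ge_sup; first by exists 0; exact: psi_dual_set0.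
exact: psi_dual_set_ubound.
Qed.

Lemma has_sup_psi_dual_set : has_sup psi_dual_set.
Proof.
have [t0 Ot0 t0_max] := simplex_ratio_max (fun i => dualnorm (xs i)) n_gt0 hpsi.
split; first by exists 0; exact: psi_dual_set0.
by exists (dual_ratio t0); exact: psi_dual_set_ubound (dual_ratio_ge0 Ot0) t0_max.
Qed.

Lemma dual_ratio_le_psi_dualnorm t : Omega t -> dual_ratio t <= psi_dualnorm psi xs.
Proof.
move=> Ot; have psi_gt0 := PsiClass_gt0 hpsi Ot.
have [X_nontriv | X_triv] := pselect (exists e : X, e != 0); last first.
  (* No unit vectors exist, but then every dual norm vanishes. *)
  have X0 (x : X) : x = 0 by apply: contra_notP X_triv => x_neq0; exists x; apply/eqP.
  rewrite /dual_ratio /simplex_ratio big1 ?mul0r => [|i _].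
    exact: sup_upper_bound has_sup_psi_dual_set _ psi_dual_set0.
  by rewrite dualnorm_trivial ?mulr0.
apply/ler_addgt0Pr => d d_gt0.
have /choice[u u_approx] : forall i, exists u,
    `|u| = 1 /\ dualnorm (xs i) - d * psi t < xs i u.
  move=> i; have [u u1 fu] := dualnorm_approx (hxs i) X_nontriv (mulr_gt0 d_gt0 psi_gt0).
  by exists u.
pose x i := (t i / psi t) *: u i.
have x_le : `|\sum_i xs i (x i)| <= psi_dualnorm psi xs.
  apply: (sup_upper_bound has_sup_psi_dual_set); exists x => //=.
  by rewrite psinorm_scaled_units // => i; exact: (u_approx i).1.
apply: le_trans (lerD (le_trans (ler_norm _) x_le) (lexx d)).
have -> : d = \sum_i t i / psi t * (d * psi t).
  by rewrite -mulr_suml -mulr_suml Ot.2 mul1r mulrCA mulVf ?mulr1 // gt_eqF.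
rewrite /dual_ratio /simplex_ratio mulr_suml -big_split /=; apply: ler_sum => i _.
rewrite /x (dual_eltZ (hxs i)) mulrAC -mulrDr ler_wpM2l ?divr_ge0 ?Ot.1 ?ltW //.
by have := (u_approx i).2; lra.
Qed.

End PsiDuality.

Theorem theorem3p1 (R : realType) (X : normedModType R) (n : nat)
  (hn : (2 <= n)%N) (psi : ('I_n -> R) -> R) (hpsi : PsiClass psi)
  (xs : 'I_n -> X -> R) (hxs : forall i, is_dual_elt (xs i)) :
  let F := fun t : 'I_n -> R => (\sum_(i < n) t i * dualnorm (xs i)) / psi t in
  (exists2 t0, Omega t0 & psi_dualnorm psi xs = F t0) /\
  (forall t, Omega t -> F t <= psi_dualnorm psi xs).
Proof.
move=> F; have n_gt0 : (0 < n)%N := ltnW hn.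
have [t0 Ot0 t0_max] := simplex_ratio_max (fun i => dualnorm (xs i)) n_gt0 hpsi.
split=> [|t]; last exact: dual_ratio_le_psi_dualnorm.
exists t0 => //; apply/le_anti.
by rewrite psi_dualnorm_le ?dual_ratio_ge0 ?dual_ratio_le_psi_dualnorm.
Qed.
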